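(* Let $(S,d)$ be a finite metric space partitioned into two disjoint groups $S=S_1\cup S_2$, let $k_1,k_2$ be nonnegative integers with $k=k_1+k_2$, and let $r^*$ be the optimal radius of the fair $k$-center problem. Suppose the points arrive in a stream in which all points of $S_1$ arrive before all points of $S_2$, and let $\Gamma_1',\Gamma_2',\Gamma_{sub}$ be produced by Algorithm B (described in the context) with $\lambda=2r^*$. Then there is a subset $\Gamma_1''\subseteq\Gamma_1'$ all of whose elements have replacements, such that with $\Gamma'_{sub}=\{\sigma(c):c\in\Gamma_1''\}$ the set $C=\Gamma_2'\cup(\Gamma_1'\setminus\Gamma_1'')\cup\Gamma'_{sub}$ is a feasible solution of the fair $k$-center problem with $d(s,C)\le 3r^*$ for every $s\in S$.
   Context: Fair $k$-center: $C\subseteq S$ is feasible if $|C\cap S_l|\le k_l$ for $l=1,2$; cost $\max_{s\in S}d(s,C)$, $d(s,C)=\min_{c\in C}d(s,c)$, $d(s,\emptyset)=\infty$; $r^*$ is the minimum cost over feasible $C$. Algorithm B (parameter $\lambda=2r^*$): initialize $\Gamma_1'=\Gamma_2'=\Gamma_{sub}=\emptyset$. Upon each arriving $i\in S_1$: if $d(i,\Gamma_1')>\lambda$, add $i$ to $\Gamma_1'$. Upon each arriving $i\in S_2$: if $|\Gamma_1'|\le k_1$, then add $i$ to $\Gamma_2'$ iff $d(i,\Gamma_1')>3\lambda/2$ and $d(i,\Gamma_2')>\lambda$; otherwise ($|\Gamma_1'|>k_1$), add $i$ to $\Gamma_2'$ iff $d(i,\Gamma_1'\cup\Gamma_2')>\lambda$,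 and, in addition, if there is a point $j\in\Gamma_1'$ that has no replacement yet and satisfies $d(i,j)\le\lambda/2$, add $i$ to $\Gamma_{sub}$ and designate $i$ as the replacement $\sigma(j)$ of such a $j$. Output $\Gamma_1',\Gamma_2',\Gamma_{sub}$. *)

From HB Require Import structures.
From mathcomp Require Import all_boot all_order all_algebra.
Set Implicit Arguments. Unset Strict Implicit. Unset Printing Implicit Defensive.
Import Order.TTheory GRing.Theory Num.Theory.
Local Open Scope ring_scope.

Section FairKCenter.
Variables (R : realFieldType) (T : finType) (d : T -> T -> R).

Definition is_metric : Prop :=
  [/\ forall x y, 0 <= d x y,
      forall x y, d x y = 0 <-> x = y,
      forall x y, d x y = d y x &
      forall x y z, d x z <= d x y + d y z].

Definition fair_feasible (S1 S2 : {set T}) (k1 k2 : nat) (C : {set T}) : Prop :=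
  (#|C :&: S1| <= k1)%N /\ (#|C :&: S2| <= k2)%N.

(* cost(C) <= r, i.e. d(s,C) <= r for every s (d(s,emptyset) = +oo) *)
Definition covers (C : {set T}) (r : R) : Prop :=
  forall s : T, exists2 c, c \in C & d s c <= r.

Definition optimal_radius (S1 S2 : {set T}) (k1 k2 : nat) (r : R) : Prop :=
  (exists2 C, fair_feasible S1 S2 k1 k2 C & covers C r) /\
  (forall C r', fair_feasible S1 S2 k1 k2 C -> covers C r' -> r <= r').

(* d(i, G) > lam, with d(i, emptyset) = +oo *)
Definition far (i : T) (G : {set T}) (lam : R) : bool :=
  [forall c in G, lam < d i c].

Record stateB := StateB {
  G1 : {set T}; G2 : {set T}; Gsub : {set T}; sigma : T -> option T }.

Definition initB : stateB := StateB set0 set0 set0 (fun _ => None).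

(* One step of Algorithm B on arriving point i.  [ch i A] is the (arbitrary)
   choice of the point j of A which gets i as replacement, when several
   candidates exist. *)
Definition stepB (S1 : {set T}) (k1 : nat) (lam : R)
    (ch : T -> {set T} -> T) (st : stateB) (i : T) : stateB :=
  let: StateB g1 g2 gs sg := st in
  if i \in S1 then
    (if far i g1 lam then StateB (i |: g1) g2 gs sg else st)
  else if (#|g1| <= k1)%N then
    (if far i g1 (3 * lam / 2) && far i g2 lam
     then StateB g1 (i |: g2) gs sg else st)
  else
    let g2' := if far i (g1 :|: g2) lam then i |: g2 else g2 in
    let cand := [set j in g1 | (sg j == None) && (d i j <= lam / 2)] in
    if cand != set0 then
      let j := ch i cand in
      StateB g1 g2' (i |: gs) (fun x => if x == j then Some i else sg x)
    else StateB g1 g2' gs sg.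

Definition runB (S1 : {set T}) (k1 : nat) (lam : R)
    (ch : T -> {set T} -> T) (stream : seq T) : stateB :=
  foldl (stepB S1 k1 lam ch) initB stream.

End FairKCenter.

From HB Require Import structures.
From mathcomp Require Import all_boot all_order all_algebra.
From mathcomp Require Import lra zify.
Import Order.TTheory GRing.Theory Num.Theory.
Local Open Scope ring_scope.

(* Fix an optimal fair solution C* and send each point to a center of C*
   within r*.  Points more than lam = 2 r* apart go to distinct centers, so a
   lam-separated set is no larger than the part of C* its centers fall in.
   After the S1-phase, G1' is lam-separated and within lam of every point of S1.
   If |G1'| <= k1, every point of G2' is more than 3 lam / 2 from G1', so its
   center lies in S2 and |G2'| <= k2; every point is within 3 lam / 2 = 3 r* of
   G1' u G2'.  Otherwise G1' u G2' is lam-separated, hence |G1'| + |G2'| <= k1 + k2,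
   and every c in G1' whose center lies in S2 got a replacement within lam / 2:
   that center arrived later within r* = lam / 2 of c.  At most k1 points of G1'
   have their center in S1, so |G1'| - k1 of them can be swapped for their
   replacements, at the price of lam / 2 in the covering radius. *)

Set Implicit Arguments. Unset Strict Implicit. Unset Printing Implicit Defensive.

Lemma exists_subset_card (T : finType) (A : {set T}) n :
  (n <= #|A|)%N -> exists2 B : {set T}, B \subset A & #|B| = n.
Proof.
move=> /card_geqP[s [s_uniq s_size sA]].
exists [set x in s]; first by apply/subsetP => x; rewrite inE => /sA.
by rewrite cardsE (card_uniqP s_uniq).
Qed.

Lemma foldl_invariant (S : Type) (A : eqType) (f : S -> A -> S)
    (P : S -> seq A -> Prop) (s : seq A) x seen :
  (forall y seen' a, a \in s -> P y seen' -> P (f y a) (rcons seen' a)) ->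
  P x seen -> P (foldl f x s) (seen ++ s).
Proof.
elim: s x seen => [|a s IHs] x seen /= Pf Px; first by rewrite cats0.
rewrite -cat_rcons; apply: IHs => [y seen' b bs|]; first by apply: Pf; rewrite inE bs orbT.
by apply: Pf; rewrite ?inE ?eqxx.
Qed.

Section FairKCenterStream.
Variables (R : realFieldType) (T : finType) (d : T -> T -> R).
Hypothesis d_metric : is_metric d.
Implicit Types (A B C G : {set T}) (e : R).

Let d_xx x : d x x = 0. Proof. by case: d_metric => _ /(_ x x) [_ ->]. Qed.
Let d_sym x y : d x y = d y x. Proof. by case: d_metric. Qed.
Let d_tri x y z : d x z <= d x y + d y z. Proof. by case: d_metric. Qed.

Lemma farP i G e : reflect (forall c, c \in G -> e < d i c) (far d i G e).
Proof. exact: forall_inP. Qed.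

Lemma farPn i G e : reflect (exists2 c, c \in G & d i c <= e) (~~ far d i G e).
Proof.
apply: (iffP forall_inPn) => [[c cG]|[c cG ic]]; first by rewrite -leNgt; exists c.
by exists c; rewrite // -leNgt.
Qed.

Lemma far_setU i A B e : far d i (A :|: B) e = far d i A e && far d i B e.
Proof.
apply/farP/andP => [iAB | [/farP iA /farP iB] c]; last by rewrite inE => /orP[/iA|/iB].
by split; apply/farP => c cX; apply: iAB; rewrite inE cX ?orbT.
Qed.

Lemma far_set1 i j e : far d i [set j] e = (e < d i j).
Proof. by apply/farP/idP => [/(_ j (set11 j)) | ij c /set1P ->]. Qed.

Lemma near_subset i A B e e' :
  A \subset B -> e <= e' -> ~~ far d i A e -> ~~ far d i B e'.
Proof.
move=> /subsetP AB ee' /farPn[c cA ic]; apply/farPn; exists c; first exact: AB.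
exact: le_trans ee'.
Qed.

Definition separated (G : {set T}) (e : R) :=
  {in G &, forall a b, a != b -> e < d a b}.

Lemma separated0 e : separated set0 e.
Proof. by move=> a b; rewrite inE. Qed.

Lemma separated_sub A B e : A \subset B -> separated B e -> separated A e.
Proof. by move=> /subsetP AB Bsep a b /AB aB /AB bB; apply: Bsep. Qed.

Lemma separated_setU1 i G e : far d i G e -> separated G e -> separated (i |: G) e.
Proof.
move=> /farP iG Gsep a b; rewrite !inE.
move=> /predU1P[->|aG] /predU1P[->|bG]; rewrite ?eqxx // => ab.
- exact: iG.
- by rewrite d_sym; apply: iG.
- exact: Gsep.
Qed.

Lemma separated_setU A B e : separated A e -> separated B e ->
  {in A & B, forall a b, e < d a b} -> separated (A :|: B) e.
Proof.
move=> Asep Bsep AB a b; rewrite !inE => /orP[aA|aB] /orP[bA|bB] ab.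
- exact: Asep.
- exact: AB.
- by rewrite d_sym; apply: AB.
- exact: Bsep.
Qed.

Lemma separated_eq G e a b :
  separated G e -> a \in G -> b \in G -> d a b <= e -> a = b.
Proof.
move=> Gsep aG bG dab; apply/eqP; apply: contraTT dab => /(Gsep _ _ aG bG).
by rewrite -ltNge.
Qed.

Lemma separated_near_eq G e x a b : separated G e -> a \in G -> b \in G ->
  d x a <= e / 2 -> d x b <= e / 2 -> a = b.
Proof.
move=> Gsep aG bG xa xb; apply: (separated_eq Gsep aG bG).
by apply: le_trans (d_tri a x b) _; rewrite d_sym; lra.
Qed.

Section NearestCenter.
Variables (C : {set T}) (r : R).
Hypothesis C_covers : covers d C r.

Definition center_of x := odflt x [pick c in C | d x c <= r].

Lemma center_ofP x : center_of x \in C /\ d x (center_of x) <= r.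
Proof.
rewrite /center_of; case: pickP => [c /andP[cC xc] // | none].
by have [c cC xc] := C_covers x; move: (none c); rewrite cC xc.
Qed.

Lemma center_of_inj G : separated G (2 * r) -> {in G &, injective center_of}.
Proof.
move=> Gsep a b aG bG ab; apply: (separated_near_eq (x := center_of a) Gsep aG bG).
- by rewrite d_sym; have [_] := center_ofP a; lra.
- by rewrite ab d_sym; have [_] := center_ofP b; lra.
Qed.

Lemma card_separated_le G (A : {set T}) : separated G (2 * r) ->
  {in G, forall g, center_of g \in A} -> (#|G| <= #|C :&: A|)%N.
Proof.
move=> Gsep GA; rewrite -(card_in_imset (center_of_inj Gsep)).
apply/subset_leq_card/subsetP => _ /imsetP[g gG ->].
by rewrite inE (center_ofP g).1 GA.
Qed.

End NearestCenter.

Lemma optimal_radius_ge0 S1 S2 k1 k2 r : optimal_radius d S1 S2 k1 k2 r -> 0 <= r.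
Proof.
case=> [[C C_feasible C_covers] r_min].
have [x _ | T0] := pickP (@predT T).
  by have [c _ xc] := C_covers x; apply: le_trans xc; case: d_metric.
have C_covers' : covers d C (r - 1) by move=> x; move: (T0 x).
by have := r_min C (r - 1) C_feasible C_covers'; lra.
Qed.

Lemma card_fair_feasible S1 S2 k1 k2 C : S1 :|: S2 = [set: T] ->
  fair_feasible S1 S2 k1 k2 C -> (#|C| <= k1 + k2)%N.
Proof.
move=> S12 [C1 C2]; apply: leq_trans (leq_add C1 C2).
by rewrite -{1}(setIT C) -S12 setIUr; apply: leq_card_setU.
Qed.

Definition replacements (st : stateB T) G :=
  [set x | [exists c in G, sigma st c == Some x]].

Definition output (st : stateB T) G :=
  G2 st :|: (G1 st :\: G) :|: replacements st G.

Lemma mem_output st G c : c \in G1 st :|: G2 st -> c \notin G -> c \in output st G.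
Proof. by rewrite /output !inE => /orP[->|->] ->; rewrite ?orbT. Qed.

Lemma mem_output_replacement st G c x :
  c \in G -> sigma st c = Some x -> x \in output st G.
Proof.
by move=> cG scx; rewrite /output !inE; apply/orP; right; apply/exists_inP; exists c; rewrite ?scx.
Qed.

Lemma card_replacements st G : (#|replacements st G| <= #|G|)%N.
Proof.
apply: leq_trans (leq_imset_card (fun c => odflt c (sigma st c)) G).
apply/subset_leq_card/subsetP => x; rewrite inE => /exists_inP[c cG /eqP scx].
by apply/imsetP; exists c; rewrite ?scx.
Qed.

Lemma output_covers st G e e' e'' : 0 <= e' -> e + e' <= e'' ->
  (forall s, ~~ far d s (G1 st :|: G2 st) e) ->
  (forall c, c \in G -> exists2 x, sigma st c = Some x & d x c <= e') ->
  covers d (output st G) e''.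
Proof.
move=> e'_ge0 e_le near_all G_repl s; have /farPn[c cU sc] := near_all s.
have [cG | cNG] := boolP (c \in G).
- have [x scx xc] := G_repl c cG; exists x; first exact: mem_output_replacement scx.
  by apply: le_trans (d_tri s c x) _; rewrite (d_sym c x); lra.
- by exists c; [exact: mem_output | lra].
Qed.

Section Stream.
Variables (S1 S2 : {set T}) (k1 : nat) (r : R) (ch : T -> {set T} -> T).
Hypotheses (S12_disjoint : [disjoint S1 & S2]) (r_ge0 : 0 <= r).
Local Notation lam := (2 * r).
Local Notation step := (stepB d S1 k1 lam ch).

Let lam_ge0 : 0 <= lam. Proof. by rewrite mulr_ge0. Qed.

Let S2_notin_S1 x : x \in S2 -> (x \in S1) = false.
Proof. exact: disjointFl. Qed.

Lemma near_setU1 i G : ~~ far d i (i |: G) lam.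
Proof. by rewrite far_setU far_set1 d_xx ltNge lam_ge0. Qed.

Definition phase1_inv (st : stateB T) (seen : seq T) :=
  [/\ G2 st = set0, sigma st =1 (fun=> None), G1 st \subset S1,
      separated (G1 st) lam & {in seen, forall x, ~~ far d x (G1 st) lam}].

Lemma step_phase1 st seen i :
  i \in S1 -> phase1_inv st seen -> phase1_inv (step st i) (rcons seen i).
Proof.
case: st => g1 g2 gs sg iS1 [/= g2E sgE g1S1 g1sep g1cov]; rewrite /stepB iS1 /=.
case: ifP => [i_far | /negbT i_near]; split => //=.
- by rewrite subUset sub1set iS1.
- exact: separated_setU1.
- move=> x; rewrite mem_rcons in_cons => /predU1P[->|/g1cov]; first exact: near_setU1.
  by rewrite far_setU negb_and orbC => ->.
- by move=> x; rewrite mem_rcons in_cons => /predU1P[->|/g1cov].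
Qed.

Lemma run_phase1 s : {subset s <= S1} -> phase1_inv (foldl step (initB T) s) s.
Proof.
move=> sS1; rewrite -[s in phase1_inv _ s]cat0s.
apply: foldl_invariant => [st seen i /sS1|]; first exact: step_phase1.
by split; rewrite ?sub0set //; apply: separated0.
Qed.

Definition G2_inv (g1 g2 : {set T}) e :=
  [/\ g2 \subset S2, separated g2 lam & {in g2, forall p, far d p g1 e}].

Lemma G2_inv0 (g1 : {set T}) e : G2_inv g1 set0 e.
Proof. by split; rewrite ?sub0set //; [apply: separated0 | move=> p; rewrite inE]. Qed.

Lemma G2_inv_setU1 (g1 g2 : {set T}) e i : i \in S2 -> far d i g1 e -> far d i g2 lam ->
  G2_inv g1 g2 e -> G2_inv g1 (i |: g2) e.
Proof.
move=> iS2 i_far1 i_far2 [g2S2 g2sep g2far]; split.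
- by rewrite subUset sub1set iS2.
- exact: separated_setU1.
- by move=> p; rewrite !inE => /predU1P[->|/g2far].
Qed.

Definition small_inv (g1 : {set T}) (st : stateB T) (seen : seq T) :=
  [/\ G1 st = g1, G2_inv g1 (G2 st) (3 * lam / 2) &
      {in seen, forall x, ~~ far d x g1 (3 * lam / 2) || ~~ far d x (G2 st) lam}].

Lemma step_small (g1 : {set T}) st seen i : (#|g1| <= k1)%N -> i \in S2 ->
  small_inv g1 st seen -> small_inv g1 (step st i) (rcons seen i).
Proof.
move=> g1_small iS2; case: st => g1' g2 gs sg [/= -> g2inv cov].
rewrite /stepB S2_notin_S1 // g1_small /=.
case: ifP => [/andP[i_far1 i_far2] | /negbT i_near]; split => //=.
- exact: G2_inv_setU1.
- move=> x; rewrite mem_rcons in_cons => /predU1P[->|/cov]; first by rewrite near_setU1 orbT.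
  by rewrite far_setU negb_and => /orP[->|->]; rewrite ?orbT.
- by move=> x; rewrite mem_rcons in_cons => /predU1P[->|/cov]; rewrite // -negb_and.
Qed.

Lemma run_small st s : (#|G1 st| <= k1)%N -> G2 st = set0 -> {subset s <= S2} ->
  small_inv (G1 st) (foldl step st s) s.
Proof.
move=> g1_small g2E sS2; rewrite -[s in small_inv _ _ s]cat0s.
apply: foldl_invariant => [st' seen i /sS2|]; first exact: step_small.
by split; rewrite ?g2E //; apply: G2_inv0.
Qed.

Definition replacement_inv (sg : T -> option T) :=
  forall c x, sg c = Some x -> x \in S2 /\ d x c <= lam / 2.

Definition large_inv (g1 : {set T}) (st : stateB T) (seen : seq T) :=
  [/\ G1 st = g1, G2_inv g1 (G2 st) lam, replacement_inv (sigma st),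
      {in seen, forall x, ~~ far d x (g1 :|: G2 st) lam} &
      {in seen & g1, forall x c, d x c <= lam / 2 -> sigma st c != None}].

Lemma G2_inv_large (g1 g2 : {set T}) i : i \in S2 -> G2_inv g1 g2 lam ->
  let g2' := if far d i (g1 :|: g2) lam then i |: g2 else g2 in
  [/\ G2_inv g1 g2' lam, ~~ far d i (g1 :|: g2') lam & g2 \subset g2'].
Proof.
move=> iS2 g2inv /=; case: ifP => [|/negbT i_near]; last by split.
rewrite far_setU => /andP[i_far1 i_far2]; split.
- exact: G2_inv_setU1.
- by rewrite setUCA near_setU1.
- exact: subsetUr.
Qed.

Lemma replacement_inv_assign sg i j : i \in S2 -> d i j <= lam / 2 ->
  replacement_inv sg -> replacement_inv (fun c => if c == j then Some i else sg c).
Proof.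
move=> iS2 ij sg_inv c x; case: eqP => [-> [<-] // | _ /sg_inv //].
Qed.

Hypothesis ch_in : forall i A, A != set0 -> ch i A \in A.

Lemma step_large (g1 : {set T}) st seen i : (k1 < #|g1|)%N -> separated g1 lam -> i \in S2 ->
  large_inv g1 st seen -> large_inv g1 (step st i) (rcons seen i).
Proof.
move=> g1_big g1sep iS2; case: st => g1' g2 gs sg [/= -> g2inv sg_inv cov has_repl].
rewrite /stepB S2_notin_S1 // leqNgt g1_big /=.
have [g2'inv i_near g2_sub] := G2_inv_large iS2 g2inv.
set g2' := if far _ _ _ _ then _ else _ in g2'inv i_near g2_sub *.
have cov' : {in rcons seen i, forall x, ~~ far d x (g1 :|: g2') lam}.
  move=> x; rewrite mem_rcons in_cons => /predU1P[->|/cov] //.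
  by apply: near_subset; rewrite ?setUS.
set cand := [set j in g1 | _].
case: ifP => [cand0 | /negbT/negPn/eqP cand_empty]; split => //=.
- have := ch_in i cand0; rewrite inE => /and3P[_ _ ij].
  exact: replacement_inv_assign.
- have := ch_in i cand0; rewrite inE => /and3P[jg1 _ ij].
  move=> x c; rewrite mem_rcons in_cons => /predU1P[-> cg1 ic | xs cg1 xc].
    (* g1 is lam-separated: the chosen j is its only point within lam / 2 of i. *)
    by rewrite (separated_near_eq g1sep cg1 jg1 ic ij) eqxx.
  by case: ifP => // _; apply: (has_repl x c).
- move=> x c; rewrite mem_rcons in_cons.
  case/predU1P => [-> cg1 ic|]; last exact: has_repl.
  apply/negP => /eqP sc; have : c \in cand by rewrite inE cg1 sc eqxx ic.
  by rewrite cand_empty inE.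
Qed.

Lemma run_large st s : (k1 < #|G1 st|)%N -> separated (G1 st) lam ->
  G2 st = set0 -> sigma st =1 (fun=> None) -> {subset s <= S2} ->
  large_inv (G1 st) (foldl step st s) s.
Proof.
move=> g1_big g1sep g2E sgE sS2; rewrite -[s in large_inv _ _ s]cat0s.
apply: foldl_invariant => [st' seen i /sS2|]; first exact: step_large.
by split; rewrite ?g2E //; [apply: G2_inv0 | move=> c x; rewrite sgE].
Qed.

Hypothesis S12_cover : S1 :|: S2 = [set: T].

Let S1_or_S2 x : x \notin S2 -> x \in S1.
Proof. by move=> xS2; have := in_setT x; rewrite -S12_cover inE (negbTE xS2) orbF. Qed.

Lemma stream_S1 s1 s2 :
  (forall x, x \in s1 ++ s2) -> {subset s2 <= S2} -> {subset S1 <= s1}.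
Proof.
move=> s12 s2S2 x xS1; move: (s12 x); rewrite mem_cat => /orP[//|/s2S2 xS2].
by rewrite S2_notin_S1 in xS1.
Qed.

Lemma stream_S2 s1 s2 :
  (forall x, x \in s1 ++ s2) -> {subset s1 <= S1} -> {subset S2 <= s2}.
Proof.
move=> s12 s1S1 x xS2; move: (s12 x); rewrite mem_cat => /orP[/s1S1 xS1|//].
by rewrite S2_notin_S1 in xS1.
Qed.

Lemma card_output_S1 st G : G2 st \subset S2 ->
  (forall c x, c \in G -> sigma st c = Some x -> x \in S2) ->
  (#|output st G :&: S1| <= #|G1 st :\: G|)%N.
Proof.
move=> g2S2 replS2; apply/subset_leq_card/subsetP => x.
rewrite /output !inE => /andP[/orP[/orP[/(subsetP g2S2) xS2 | //] | xr] xS1].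
  by rewrite S2_notin_S1 in xS1.
have [c cG /eqP scx] := exists_inP xr.
by rewrite S2_notin_S1 ?(replS2 c x) in xS1.
Qed.

Lemma card_output_S2 st G : G1 st \subset S1 ->
  (#|output st G :&: S2| <= #|G2 st| + #|G|)%N.
Proof.
move=> g1S1; apply: leq_trans (leq_add (leqnn _) (card_replacements st G)).
apply: leq_trans (leq_card_setU _ _); apply/subset_leq_card/subsetP => x.
rewrite /output !inE => /andP[/orP[/orP[-> // | /andP[_ /(subsetP g1S1) xS1]] | ->] xS2].
  by rewrite S2_notin_S1 in xS1.
by rewrite orbT.
Qed.

Variables (k2 : nat) (Cs : {set T}).
Hypotheses (Cs_feasible : fair_feasible S1 S2 k1 k2 Cs) (Cs_covers : covers d Cs r).

Definition valid_output st G :=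
  [/\ G \subset G1 st, forall c, c \in G -> sigma st c != None &
      fair_feasible S1 S2 k1 k2 (output st G) /\ covers d (output st G) (3 * r)].

Lemma solution_small st1 st s1 s2 : (forall x, x \in s1 ++ s2) -> {subset S1 <= s1} ->
  (#|G1 st1| <= k1)%N -> phase1_inv st1 s1 -> small_inv (G1 st1) st s2 ->
  exists G, valid_output st G.
Proof.
move=> s12 S1s1 g1_small [_ _ g1S1 _ g1cov] [g1E [g2S2 g2sep g2far] cov].
exists set0; split; rewrite ?sub0set //; first by move=> c; rewrite inE.
split; first split.
- apply: leq_trans (card_output_S1 g2S2 _) _ => [c x|]; first by rewrite inE.
  by rewrite g1E setD0.
- apply: leq_trans (card_output_S2 _ _) _; first by rewrite g1E.
  rewrite cards0 addn0; apply: leq_trans Cs_feasible.2.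
  apply: (card_separated_le Cs_covers g2sep) => p pG2.
  have [_ pF] := center_ofP Cs_covers p.
  apply: contraT => /S1_or_S2 /S1s1 /g1cov /farPn[c cg1 Fc].
  have pc : d p c <= 3 * lam / 2 by apply: le_trans (d_tri p _ c) _; lra.
  by have /farP/(_ c cg1) := g2far p pG2; rewrite ltNge pc.
- apply: (output_covers (e := 3 * r) (e' := 0)) => [||s|c] //; first by rewrite addr0.
    rewrite g1E; have := s12 s; rewrite mem_cat => /orP[/g1cov | /cov /orP[]];
    by apply: near_subset; rewrite ?subsetUl ?subsetUr //; move: r_ge0; lra.
  by rewrite inE.
Qed.

Lemma card_separatedU_le (g1 g2 : {set T}) : g1 \subset S1 -> g2 \subset S2 ->
  separated (g1 :|: g2) lam -> (#|g1| + #|g2| <= k1 + k2)%N.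
Proof.
move=> g1S1 g2S2 g12sep; have [_] := leq_card_setU g1 g2.
rewrite (disjointWl g1S1 (disjointWr g2S2 S12_disjoint)) => /eqP <-.
apply: leq_trans (card_fair_feasible S12_cover Cs_feasible).
by rewrite -(setIT Cs); apply: (card_separated_le Cs_covers g12sep) => g; rewrite inE.
Qed.

Lemma exists_replaced_subset (g1 : {set T}) (sg : T -> option T) (s2 : seq T) :
  {subset S2 <= s2} -> separated g1 lam ->
  {in s2 & g1, forall x c, d x c <= lam / 2 -> sg c != None} ->
  exists2 G : {set T}, G \subset g1 & {in G, forall c, sg c != None} /\ #|G| = (#|g1| - k1)%N.
Proof.
move=> S2s2 g1sep has_repl; set F := center_of Cs r.
set B := [set g in g1 | F g \in S2].
have B_g1 : B \subset g1 by apply/subsetP => g; rewrite inE => /andP[].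
have g1B_small : (#|g1 :\: B| <= k1)%N.
  apply: leq_trans Cs_feasible.1.
  apply: (card_separated_le Cs_covers (separated_sub (subsetDl _ _) g1sep)) => g.
  by rewrite !inE => /andP[gNB gg1]; apply: S1_or_S2; move: gNB; rewrite gg1.
have [G G_B cardG] : exists2 G : {set T}, G \subset B & #|G| = (#|g1| - k1)%N.
  apply: exists_subset_card; have := cardsID B g1; rewrite (setIidPr B_g1); lia.
exists G; first exact: subset_trans G_B B_g1.
split=> // g /(subsetP G_B); rewrite inE => /andP[gg1 FgS2].
apply: (has_repl (F g) g) => //; first exact: S2s2.
by rewrite d_sym; have [_] := center_ofP Cs_covers g; lra.
Qed.

Lemma solution_large st1 st s1 s2 : (forall x, x \in s1 ++ s2) -> {subset S2 <= s2} ->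
  (k1 < #|G1 st1|)%N -> phase1_inv st1 s1 -> large_inv (G1 st1) st s2 ->
  exists G, valid_output st G.
Proof.
move=> s12 S2s2 g1_big [_ _ g1S1 g1sep g1cov] [g1E [g2S2 g2sep g2far] sg_inv cov has_repl].
set g1 := G1 st1 in g1_big g1S1 g1sep g1cov g1E g2far cov has_repl.
have [G G_g1 [G_repl cardG]] := exists_replaced_subset S2s2 g1sep has_repl.
have g1g2_small : (#|g1| + #|G2 st| <= k1 + k2)%N.
  apply: card_separatedU_le g1S1 g2S2 _; apply: separated_setU g1sep g2sep _.
  by move=> a b ag1 bG2; rewrite d_sym; apply/farP: a ag1; apply: g2far.
exists G; split; rewrite ?g1E //; split; first split.
- apply: leq_trans (card_output_S1 g2S2 _) _ => [c x _ /sg_inv[] //|].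
  by rewrite g1E cardsDS //; lia.
- apply: leq_trans (card_output_S2 _ _) _; first by rewrite g1E.
  by rewrite cardG; lia.
- apply: (output_covers (e := 2 * r) (e' := r)) => // [|s|c cG].
  + by move: r_ge0; lra.
  + rewrite g1E; have := s12 s; rewrite mem_cat => /orP[/g1cov | /cov //].
    by apply: near_subset; rewrite ?subsetUl.
  + have := G_repl c cG; case scx: (sigma st c) => [x|] // _.
    by exists x => //; have [_] := sg_inv c x scx; lra.
Qed.

Lemma runB_valid_output s1 s2 :
  (forall x, x \in s1 ++ s2) -> {subset s1 <= S1} -> {subset s2 <= S2} ->
  exists G, valid_output (runB d S1 k1 lam ch (s1 ++ s2)) G.
Proof.
move=> s12 s1S1 s2S2; rewrite /runB foldl_cat.
set st1 := foldl _ (initB T) s1.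
have phase1 : phase1_inv st1 s1 by apply: run_phase1.
have [g2E sgE _ g1sep _] := phase1.
have [g1_small | g1_big] := leqP #|G1 st1| k1.
- apply: (solution_small s12 (stream_S1 s12 s2S2) g1_small phase1).
  exact: run_small.
- apply: (solution_large s12 (stream_S2 s12 s1S1) g1_big phase1).
  exact: run_large.
Qed.

End Stream.

End FairKCenterStream.

Unset Implicit Arguments. Set Strict Implicit.
Theorem mainTheorem9 (R : realFieldType) (T : finType) (d : T -> T -> R)
    (S1 S2 : {set T}) (k1 k2 : nat) (rstar : R)
    (s1 s2 : seq T) (ch : T -> {set T} -> T) :
  is_metric d ->
  [disjoint S1 & S2] -> S1 :|: S2 = [set: T] ->
  optimal_radius d S1 S2 k1 k2 rstar ->
  (* the stream: all points of S1 (in s1) arrive before all points of S2 (in s2) *)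
  uniq (s1 ++ s2) -> (forall x, x \in s1 ++ s2) ->
  {subset s1 <= S1} -> {subset s2 <= S2} ->
  (* ch picks one of the candidates whenever there is one *)
  (forall i (A : {set T}), A != set0 -> ch i A \in A) ->
  let st := runB d S1 k1 (2 * rstar) ch (s1 ++ s2) in
  exists G1'' : {set T},
    [/\ G1'' \subset G1 st,
        (forall c, c \in G1'' -> sigma st c != None) &
        let Gsub' := [set x | [exists c in G1'', sigma st c == Some x]] in
        let C := G2 st :|: (G1 st :\: G1'') :|: Gsub' in
        fair_feasible S1 S2 k1 k2 C /\
        (forall s, exists2 c, c \in C & d s c <= 3 * rstar)].
Proof.
move=> d_metric S12_disjoint S12_cover r_opt _ s12 s1S1 s2S2 ch_in.
have r_ge0 := optimal_radius_ge0 d_metric r_opt.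
have [[Cs Cs_feasible Cs_covers] _] := r_opt.
exact: (runB_valid_output d_metric S12_disjoint r_ge0 ch_in S12_cover
  Cs_feasible Cs_covers s12 s1S1 s2S2).
Qed.
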